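(* Let $C$ be a ring of characteristic zero. For any non-empty set $X$, the free Baxter algebra $\text{Ш}_C(X)$ is not a noetherian algebra.
   Context: For a commutative $C$-algebra $A$ and $\lambda\in C$, the shuffle Baxter algebra $\text{Ш}_C(A)=\bigoplus_{k\in\mathbb{N}}A^{\otimes(k+1)}$ has product $(x_0\otimes x_1\otimes\cdots\otimes x_m)(y_0\otimes y_1\otimes\cdots\otimes y_n)=x_0y_0\otimes(\text{sum over mixable shuffles of } x_1\otimes\cdots\otimes x_m \text{ and } y_1\otimes\cdots\otimes y_n)$, where a mixable shuffle is a shuffle of the two words in which some adjacent pairs (an $x_i$ immediately followed by a $y_j$) are replaced by the product $x_iy_j$, each such merger contributing a factor $\lambda$; the Baxter operator is $P_A(x_0\otimes\cdots\otimes x_n)=\mathbf{1}_A\otimes x_0\otimes\cdots\otimes x_n$. It is the free Baxter $C$-algebra of weight $\lambda$ on $A$. For a set $X$, $\text{Ш}_C(X):=\text{Ш}_C(C[X])$ is the free Baxter $C$-algebra of weight $\lambda$ on $X$ (here $\lambda\in C$ arbitrary). *)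

From HB Require Import structures.
From mathcomp Require Import all_boot all_algebra.
From mathcomp Require Import finmap.
From mathcomp Require Import monalg.
Set Implicit Arguments. Unset Strict Implicit. Unset Printing Implicit Defensive.
Import GRing.Theory.
Local Open Scope ring_scope.

Definition char_zero (C : comNzRingType) : Prop :=
  forall n : nat, (0 < n)%N -> (n%:R : C) != 0.

Section Shuffle.
Variables (C : comNzRingType) (X : choiceType) (lambda : C).

Definition Mon := {cmonom X}.

(* A^{\otimes (k+1)} with A = C[X] has C-basis the (k+1)-tuples of monomials;
   hence Sha_C(X) = (+)_k A^{\otimes(k+1)} is the free C-module on the
   words (x0, [x1; ...; xk]) of monomials. *)
Definition Word := (Mon * seq Mon)%type.
Definition Sha := {malg C[Word]}.

Definition pre (a : Mon) (p : {malg C[seq Mon]}) : {malg C[seq Mon]} :=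
  \sum_(w <- msupp p) << p@_w *g (a :: w) >>.

(* Sum over the mixable shuffles of u and v (weight lambda): every shuffle
   of u and v in which some pairs x_i y_j (x_i immediately followed by y_j)
   are merged into x_i y_j, each merger giving a factor lambda.  Computed by
   the recursion on the first letter of a mixable shuffle (x_i alone, y_j
   alone, or the merged x_i y_j). *)
Fixpoint mshuffle (u : seq Mon) : seq Mon -> {malg C[seq Mon]} :=
  match u with
  | [::] => fun v => << v >>
  | a :: u' =>
      fix msh_r (v : seq Mon) : {malg C[seq Mon]} :=
        match v with
        | [::] => << a :: u' >>
        | b :: v' =>
            pre a (mshuffle u' v) + pre b (msh_r v')
            + lambda *: pre (mulcm a b) (mshuffle u' v')
        end
  end.

(* Product of two basis tensors:
   (x0 (x) x1..xm)(y0 (x) y1..yn) = x0 y0 (x) (mixable shuffles). *)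
Definition word_mul (w1 w2 : Word) : Sha :=
  let p := mshuffle w1.2 w2.2 in
  \sum_(w <- msupp p) << p@_w *g (mulcm w1.1 w2.1, w) >>.

Definition sha_mul (f g : Sha) : Sha :=
  \sum_(u <- msupp f) \sum_(v <- msupp g) (f@_u * g@_v) *: word_mul u v.

Definition sha_P (f : Sha) : Sha :=
  \sum_(u <- msupp f) << f@_u *g (onecm X, u.1 :: u.2) >>.

(* Ideals of Sha_C(X) (the algebra is commutative). *)
Definition sha_ideal (I : Sha -> Prop) : Prop :=
  [/\ I 0,
      (forall x y, I x -> I y -> I (x - y)) &
      (forall r x, I x -> I (sha_mul r x))].

Definition sha_noetherian : Prop :=
  forall I : nat -> Sha -> Prop,
    (forall n, sha_ideal (I n)) ->
    (forall n x, I n x -> I n.+1 x) ->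
    exists N, forall n, (N <= n)%N -> forall x, I n x <-> I N x.

End Shuffle.

From HB Require Import structures.
From mathcomp Require Import all_boot all_algebra.
From mathcomp Require Import finmap.
From mathcomp Require Import monalg.
From mathcomp Require Import ring.
Set Implicit Arguments. Unset Strict Implicit. Unset Printing Implicit Defensive.
Import GRing.Theory.
Local Open Scope ring_scope.

(* Dually to Sha_C(X), consider C-valued functionals phi on the tails x1 ... xn of
   the basis tensors x0 (x) x1 (x) ... (x) xn, i.e. on words of monomials.  Pairing
   phi with mixable shuffles gives a two-variable functional [coshuffle phi], and
   the deconcatenation product [catconv] of functionals is multiplicative for it.
   Fix x in X and let y be the monomial x.  The indicators delta1 and deltay of the
   one-letter words 1 and y satisfy: eps + lam delta1 is grouplike and deltay is
   skew primitive; hence so is every iterated commutator ad(delta1)^m deltay, with a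
   weight supported on the words 1 ... 1.  Therefore the f whose coefficients vanish
   on tensors with tail 1 ... 1 and that are orthogonal to ad(delta1)^m deltay for
   all m >= n form an ideal I_n.  As ad(delta1)^m deltay is homogeneous of degree
   m + 1 and equals 1 on the word 1^m y, the tensor 1 (x) 1^n y lies in I_(n+1) but
   not in I_n.  Neither the characteristic of C nor lambda plays any role. *)

Notation mpair phi := (mmap idfun phi).

Section Pairing.
Variables (C : comNzRingType) (K : choiceType).
Implicit Types (phi psi : K -> C) (P Q : {malg C[K]}).

Lemma mpairD phi P Q : mpair phi (P + Q) = mpair phi P + mpair phi Q.
Proof. exact: raddfD. Qed.

Lemma mpair_sum phi (I : Type) (r : seq I) (F : I -> {malg C[K]}) :
  mpair phi (\sum_(i <- r) F i) = \sum_(i <- r) mpair phi (F i).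
Proof. exact: raddf_sum. Qed.

Lemma mpairU phi c k : mpair phi << c *g k >> = c * phi k.
Proof. exact: mmapU. Qed.

Lemma mpairZ phi c P : mpair phi (c *: P) = c * mpair phi P.
Proof.
rewrite (mmapEw (msuppZ_le c P)) mmapE big_distrr /=.
by apply: eq_bigr => k _; rewrite mcoeffZ mulrA.
Qed.

Lemma eq_mpair phi psi : phi =1 psi -> mpair phi =1 mpair psi.
Proof. by move=> e P; apply: eq_bigr => k _; rewrite e. Qed.

Lemma mpair_addf phi psi P : mpair (phi \+ psi) P = mpair phi P + mpair psi P.
Proof. by rewrite !mmapE -big_split; apply: eq_bigr => k _; rewrite mulrDr. Qed.

Lemma mpair_scalef c phi P : mpair (fun k => c * phi k) P = c * mpair phi P.
Proof. by rewrite !mmapE big_distrr; apply: eq_bigr => k _; rewrite mulrCA. Qed.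

Lemma mcoeff_mpair k P : P@_k = mpair (fun k' => (k' == k)%:R) P.
Proof.
rewrite {1}(monalgE P) raddf_sum; apply: eq_bigr => k' _.
by rewrite /= mcoeffU mulr_natr.
Qed.

End Pairing.

Section Coshuffle.
Variables (C : comNzRingType) (X : choiceType) (lam : C).
Local Notation M := (Mon X).
Local Notation W := (seq M).
Implicit Types (phi psi : W -> C) (a b : M) (u v w : W).

Definition dcons a phi : W -> C := fun w => phi (a :: w).

Definition coshuffle phi u v : C := mpair phi (mshuffle lam u v).

Lemma mpair_pre phi a P : mpair phi (pre a P) = mpair (dcons a phi) P.
Proof. by rewrite mpair_sum; apply: eq_bigr => w _; rewrite mpairU. Qed.

Lemma coshuffle_nill phi v : coshuffle phi [::] v = phi v.
Proof. by rewrite /coshuffle /= mpairU mul1r. Qed.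

Lemma coshuffle_nilr phi u : coshuffle phi u [::] = phi u.
Proof. by case: u => [|a u]; rewrite /coshuffle /= mpairU mul1r. Qed.

Lemma coshuffle_cons phi a u b v :
  coshuffle phi (a :: u) (b :: v) =
  coshuffle (dcons a phi) u (b :: v) + coshuffle (dcons b phi) (a :: u) v
  + lam * coshuffle (dcons (mulcm a b) phi) u v.
Proof.
(* Abstracting the three shuffles keeps [mshuffle] from being unfolded. *)
have expand P1 P2 P3 : mpair phi (pre a P1 + pre b P2 + lam *: pre (mulcm a b) P3) =
    mpair (dcons a phi) P1 + mpair (dcons b phi) P2 + lam * mpair (dcons (mulcm a b) phi) P3.
  by rewrite !mpairD mpairZ; congr (_ + _ + _ * _); apply: mpair_pre.
exact: expand.
Qed.

Lemma eq_coshuffle phi psi : phi =1 psi -> coshuffle phi =2 coshuffle psi.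
Proof. by move=> e u v; apply: eq_mpair. Qed.

Lemma coshuffle_addf phi psi u v :
  coshuffle (phi \+ psi) u v = coshuffle phi u v + coshuffle psi u v.
Proof. exact: mpair_addf. Qed.

Lemma coshuffle_scalef c phi u v :
  coshuffle (fun w => c * phi w) u v = c * coshuffle phi u v.
Proof. exact: mpair_scalef. Qed.

Lemma coshuffle0f u v : coshuffle (fun=> 0) u v = 0.
Proof. by apply: big1 => w _; rewrite mulr0. Qed.

Definition catconv phi psi : W -> C :=
  fun w => \sum_(i < (size w).+1) phi (take i w) * psi (drop i w).

Definition catconv2 (F G : W -> W -> C) : W -> W -> C :=
  fun u v => \sum_(i < (size u).+1) \sum_(j < (size v).+1)
     F (take i u) (take j v) * G (drop i u) (drop j v).

Lemma eq_catconv phi phi' psi psi' :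
  phi =1 phi' -> psi =1 psi' -> catconv phi psi =1 catconv phi' psi'.
Proof. by move=> e1 e2 w; apply: eq_bigr => i _; rewrite e1 e2. Qed.

Lemma catconv_cons phi psi a w :
  catconv phi psi (a :: w) = phi [::] * psi (a :: w) + catconv (dcons a phi) psi w.
Proof. by rewrite /catconv big_ord_recl. Qed.

Lemma dcons_catconv a phi psi :
  dcons a (catconv phi psi) =1 catconv (dcons a phi) psi \+ (fun w => phi [::] * dcons a psi w).
Proof. by move=> w; rewrite /dcons catconv_cons addrC. Qed.

Lemma catconv2_consl F G a u v :
  catconv2 F G (a :: u) v =
  catconv (F [::]) (G (a :: u)) v + catconv2 (fun u' => F (a :: u')) G u v.
Proof. by rewrite /catconv2 big_ord_recl. Qed.

Lemma catconv2_consr F G u b v :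
  catconv2 F G u (b :: v) =
  catconv (F^~ [::]) (G^~ (b :: v)) u + catconv2 (fun u' v' => F u' (b :: v')) G u v.
Proof.
by rewrite /catconv2 /catconv -big_split; apply: eq_bigr => i _; rewrite big_ord_recl.
Qed.

Lemma catconv2_addl F F' G u v :
  catconv2 (fun u' v' => F u' v' + F' u' v') G u v = catconv2 F G u v + catconv2 F' G u v.
Proof.
rewrite /catconv2 -big_split; apply: eq_bigr => i _.
by rewrite -big_split; apply: eq_bigr => j _; rewrite mulrDl.
Qed.

Lemma catconv2_scalel c F G u v :
  catconv2 (fun u' v' => c * F u' v') G u v = c * catconv2 F G u v.
Proof.
rewrite /catconv2 mulr_sumr; apply: eq_bigr => i _.
by rewrite mulr_sumr; apply: eq_bigr => j _; rewrite mulrA.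
Qed.

Lemma coshuffle_catconv phi psi u v :
  coshuffle (catconv phi psi) u v = catconv2 (coshuffle phi) (coshuffle psi) u v.
Proof.
elim: u phi psi v => [|a u IHu] phi psi v.
  rewrite coshuffle_nill /catconv2 big_ord1; apply: eq_bigr => j _.
  by rewrite !coshuffle_nill.
elim: v phi psi => [|b v IHv] phi psi.
  rewrite coshuffle_nilr /catconv2; apply: eq_bigr => i _.
  by rewrite big_ord1 !coshuffle_nilr.
rewrite coshuffle_cons !(eq_coshuffle (dcons_catconv _ _ _)) !coshuffle_addf.
rewrite !coshuffle_scalef IHu IHv IHu catconv2_consr catconv2_consl.
rewrite [RHS]catconv2_consl [X in _ = _ + X]catconv2_consr [X in _ = X + _]catconv_cons.
have -> : catconv2 (fun u' v' => coshuffle phi (a :: u') (b :: v')) (coshuffle psi) u v =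
    catconv2 (fun u' v' => coshuffle (dcons a phi) u' (b :: v')) (coshuffle psi) u v
    + catconv2 (fun u' v' => coshuffle (dcons b phi) (a :: u') v') (coshuffle psi) u v
    + lam * catconv2 (coshuffle (dcons (mulcm a b) phi)) (coshuffle psi) u v.
  rewrite -catconv2_scalel -!catconv2_addl.
  by apply: eq_bigr => i _; apply: eq_bigr => j _; rewrite coshuffle_cons.
have -> : catconv ((coshuffle (dcons a phi))^~ [::]) ((coshuffle psi)^~ (b :: v)) u =
    catconv (fun u' => coshuffle phi (a :: u') [::]) ((coshuffle psi)^~ (b :: v)) u.
  by apply: eq_catconv => // w; rewrite !coshuffle_nilr.
have -> : catconv (coshuffle (dcons b phi) [::]) (coshuffle psi (a :: u)) v =
    catconv (dcons b (coshuffle phi [::])) (coshuffle psi (a :: u)) v.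
  by apply: eq_catconv => // w; rewrite /dcons !coshuffle_nill.
rewrite [coshuffle psi (a :: u) (b :: v)]coshuffle_cons coshuffle_nill.
ring.
Qed.

End Coshuffle.

Section Letters.
Variables (C : comNzRingType) (X : choiceType) (lam : C).
Local Notation M := (Mon X).
Local Notation W := (seq M).
Local Notation coshuffle := (coshuffle lam).
Implicit Types (phi : W -> C) (f h : M -> C) (a b : M) (u v w : W).

Definition eps : W -> C := fun w => (w == [::])%:R.

Definition letter f : W -> C := fun w => if w is [:: a] then f a else 0.

Lemma eps_nil : eps [::] = 1. Proof. by []. Qed.
Lemma eps_cons a w : eps (a :: w) = 0. Proof. by []. Qed.

Lemma letter_nil f : letter f [::] = 0. Proof. by []. Qed.
Lemma letter_cons f a w : letter f (a :: w) = f a * eps w.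
Proof. by case: w => [|b w]; rewrite /= ?mulr1 ?mulr0. Qed.

Lemma catconv_epsl phi : catconv eps phi =1 phi.
Proof.
case=> [|a w]; first by rewrite /catconv big_ord1 mul1r.
by rewrite catconv_cons mul1r addrC -[RHS]add0r; congr (_ + _); apply: big1 => i _; rewrite mul0r.
Qed.

Lemma catconv_epsr phi : catconv phi eps =1 phi.
Proof.
move=> w; rewrite /catconv big_ord_recr /= take_size drop_size mulr1 big1 ?add0r //.
move=> i _; rewrite /eps -size_eq0 size_drop subn_eq0 leqNgt ltn_ord.
by rewrite mulr0.
Qed.

Lemma coshuffle_eps u v : coshuffle eps u v = eps u * eps v.
Proof.
case: u => [|a u]; first by rewrite coshuffle_nill mul1r.
case: v => [|b v]; first by rewrite coshuffle_nilr mulr1.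
have dcons_eps c : dcons c eps =1 (fun=> 0) by [].
rewrite coshuffle_cons !(eq_coshuffle _ (dcons_eps _)).
by rewrite !coshuffle0f !eps_cons !mulr0 !addr0.
Qed.

Lemma coshuffle_letter_cons f a u b v :
  coshuffle (letter f) (a :: u) (b :: v) = lam * (f (mulcm a b) * (eps u * eps v)).
Proof.
have dcons_letter c : dcons c (letter f) =1 (fun w => f c * eps w).
  by move=> w; rewrite /dcons letter_cons.
rewrite coshuffle_cons !(eq_coshuffle _ (dcons_letter _)) !coshuffle_scalef.
by rewrite !coshuffle_eps !eps_cons !(mulr0, mul0r, add0r).
Qed.

Lemma coshuffle_letterM f : (forall a b, f (mulcm a b) = f a * f b) ->
  forall u v, coshuffle (letter f) u v =
    letter f u * eps v + eps u * letter f v + lam * (letter f u * letter f v).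
Proof.
move=> fM [|a u] [|b v]; last first.
  by rewrite coshuffle_letter_cons fM !letter_cons !eps_cons; ring.
all: by rewrite ?coshuffle_nill ?coshuffle_nilr letter_nil eps_nil; ring.
Qed.

Definition skew_primitive (G A : W -> C) : Prop :=
  forall u v, coshuffle A u v = A u * G v + G u * A v.

Lemma skew_primitive_letter f h : (forall a b, f (mulcm a b) = h a * f b + f a * h b) ->
  skew_primitive (fun w => eps w + lam * letter h w) (letter f).
Proof.
move=> fD [|a u] [|b v]; last first.
  by rewrite coshuffle_letter_cons fD !letter_cons !eps_cons; ring.
all: by rewrite ?coshuffle_nill ?coshuffle_nilr !letter_nil eps_nil; ring.
Qed.

End Letters.

Section Commutator.
Variables (C : comNzRingType) (X : choiceType) (lam : C).
Local Notation W := (seq (Mon X)).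
Local Notation coshuffle := (coshuffle lam).
Local Notation eps := (@eps C X).
Implicit Types (L A G : W -> C) (u v w : W).

Definition tensor_sum (T : seq (C * (W -> C) * (W -> C))) u v : C :=
  \sum_(t <- T) t.1.1 * (t.1.2 u * t.2 v).

Lemma eq_catconv2 (F F' G G' : W -> W -> C) :
  F =2 F' -> G =2 G' -> catconv2 F G =2 catconv2 F' G'.
Proof.
by move=> eF eG u v; apply: eq_bigr => i _; apply: eq_bigr => j _; rewrite eF eG.
Qed.

Lemma catconv2_tensor_sum T1 T2 u v :
  catconv2 (tensor_sum T1) (tensor_sum T2) u v =
  \sum_(s <- T1) \sum_(t <- T2)
     (s.1.1 * t.1.1) * (catconv s.1.2 t.1.2 u * catconv s.2 t.2 v).
Proof.
rewrite /catconv2 /tensor_sum.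
under eq_bigr do under eq_bigr do rewrite big_distrlr.
under eq_bigr do rewrite exchange_big.
rewrite exchange_big; apply: eq_bigr => s _.
under eq_bigr do rewrite exchange_big.
rewrite exchange_big; apply: eq_bigr => t _.
rewrite /catconv big_distrlr mulr_sumr; apply: eq_bigr => i _.
rewrite mulr_sumr; apply: eq_bigr => j _.
by rewrite /=; ring.
Qed.

(* The first hypothesis says that [eps + lam L] is grouplike. *)
Lemma skew_primitive_commutator L A G :
  (forall u v, coshuffle L u v = L u * eps v + eps u * L v + lam * (L u * L v)) ->
  skew_primitive lam G A -> catconv G L =1 catconv L G ->
  skew_primitive lam (fun w => G w + lam * catconv L G w)
    (fun w => catconv L A w - catconv A L w).
Proof.
move=> DL DA GL u v.
have sub w : catconv L A w - catconv A L w = catconv L A w + (-1) * catconv A L w.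
  by rewrite mulN1r.
rewrite (eq_coshuffle _ sub) coshuffle_addf coshuffle_scalef !coshuffle_catconv.
have DL' : coshuffle L =2 tensor_sum [:: (1, L, eps); (1, eps, L); (lam, L, L)].
  by move=> u' v'; rewrite DL /tensor_sum !big_cons big_nil /=; ring.
have DA' : coshuffle A =2 tensor_sum [:: (1, A, G); (1, G, A)].
  by move=> u' v'; rewrite DA /tensor_sum !big_cons big_nil /=; ring.
rewrite (eq_catconv2 DL' DA') (eq_catconv2 DA' DL') !catconv2_tensor_sum.
rewrite !big_cons !big_nil /= !catconv_epsl !catconv_epsr !GL.
ring.
Qed.

End Commutator.

Section OneSupport.
Variables (C : comNzRingType) (X : choiceType) (lam : C).
Local Notation M := (Mon X).
Local Notation W := (seq M).
Local Notation one := (onecm X).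
Local Notation coshuffle := (coshuffle lam).
Local Notation eps := (@eps C X).
Implicit Types (phi psi : W -> C) (a b : M) (u v w : W).

Lemma mulcm_eq1 a b : (mulcm a b == one) = (a == one) && (b == one).
Proof. exact: cmM_eq1. Qed.

Definition all_one w : bool := all (pred1 one) w.

Definition one_supported phi : Prop := forall w, ~~ all_one w -> phi w = 0.

Definition delta1 : W -> C := letter (fun a => (a == one)%:R).

Lemma coshuffle_delta1 u v :
  coshuffle delta1 u v = delta1 u * eps v + eps u * delta1 v + lam * (delta1 u * delta1 v).
Proof.
by apply: coshuffle_letterM => a b; rewrite mulcm_eq1; case: (a == one); case: (b == one);
  rewrite ?mulr1 ?mulr0.
Qed.

Lemma one_supported_eps : one_supported eps.
Proof. by case. Qed.

Lemma one_supported_delta1 : one_supported delta1.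
Proof.
case=> [|a w] // nw; rewrite /delta1 letter_cons.
have [a1|_] := eqVneq a one; last by rewrite mul0r.
by rewrite one_supported_eps ?mulr0 //; move: nw; rewrite /all_one /= a1 eqxx.
Qed.

Lemma one_supported_catconv phi psi :
  one_supported phi -> one_supported psi -> one_supported (catconv phi psi).
Proof.
move=> sphi spsi w nw; apply: big1 => i _.
have : ~~ all_one (take i w) || ~~ all_one (drop i w).
  by rewrite -negb_and /all_one -all_cat cat_take_drop.
by case/orP => [/sphi|/spsi] ->; rewrite ?mul0r ?mulr0.
Qed.

(* Words in the letter [one] alone are determined by their length. *)
Lemma catconvC_one_supported phi psi :
  one_supported phi -> one_supported psi -> catconv phi psi =1 catconv psi phi.
Proof.
move=> sphi spsi w; have [w1|nw] := boolP (all_one w); last first.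
  by rewrite !one_supported_catconv.
rewrite (all_pred1P _ _ w1) /catconv size_nseq (reindex_inj rev_ord_inj) /=.
apply: eq_bigr => i _; have le_i : (i <= size w)%N by rewrite -ltnS.
by rewrite subSS !take_nseq ?leq_subr // !drop_nseq subKn // mulrC.
Qed.

Lemma coshuffle_one_supported phi u v :
  one_supported phi -> ~~ all_one v -> coshuffle phi u v = 0.
Proof.
elim: u phi v => [|a u IHu] phi v sphi nv; first by rewrite coshuffle_nill sphi.
elim: v phi sphi nv => [//|b v IHv] phi sphi nv.
have sdcons c : one_supported (dcons c phi).
  by move=> w nw; rewrite /dcons sphi //= negb_and nw orbT.
have dcons0 c : c != one -> dcons c phi =1 (fun=> 0).
  by move=> nc w; rewrite /dcons sphi //= negb_and nc.
have zero c u' v' : c != one -> coshuffle (dcons c phi) u' v' = 0.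
  by move=> nc; rewrite (eq_coshuffle _ (dcons0 c nc)) coshuffle0f.
rewrite coshuffle_cons IHu //.
have [b1|nb] := eqVneq b one.
  have nv' : ~~ all_one v by move: nv; rewrite /all_one /= b1 eqxx.
  by rewrite IHv // IHu // mulr0 !addr0.
by rewrite !zero ?mulcm_eq1 ?(negbTE nb) ?andbF // mulr0 !addr0.
Qed.

End OneSupport.

Section IteratedCommutators.
Variables (C : comNzRingType) (X : choiceType) (lam : C) (x : X).
Local Notation M := (Mon X).
Local Notation W := (seq M).
Local Notation one := (onecm X).
Local Notation y := (ucm x).
Local Notation eps := (@eps C X).
Local Notation delta1 := (@delta1 C X).
Implicit Types (phi psi : W -> C) (a b : M) (w : W).

Lemma ucm_eq1 : (y == one) = false.
Proof. exact: cm1_eq1. Qed.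

Lemma mulcm_eq_ucm a b :
  (mulcm a b == y) = (a == one) && (b == y) || (a == y) && (b == one).
Proof.
apply/eqP/idP => [ab_y|]; last by case/orP=> /andP[/eqP-> /eqP->]; rewrite ?mul0cm ?mulcm0.
have : (mdeg a + mdeg b = 1)%N.
  by rewrite -mdegM; change (mdeg (mulcm a b) = 1%N); rewrite ab_y mdegU.
case: (mdeg a) (@mdeg_eq0I _ a) => [a1 _|[|//] _].
  have {}a1 : a = one by exact: a1.
  by rewrite a1 mul0cm in ab_y; rewrite a1 ab_y !eqxx.
rewrite add1n => -[/mdeg_eq0I b1]; have {}b1 : b = one by exact: b1.
by rewrite b1 mulcm0 in ab_y; rewrite b1 ab_y !eqxx orbT.
Qed.

Definition deltay : W -> C := letter (fun a => (a == y)%:R).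

Lemma skew_primitive_deltay : skew_primitive lam (fun w => eps w + lam * delta1 w) deltay.
Proof.
apply: skew_primitive_letter => a b; rewrite mulcm_eq_ucm.
have [->|_] := eqVneq a one; last by case: (a == y); case: (b == one) => /=; ring.
by rewrite (eq_sym one y) ucm_eq1; case: (b == y); case: (b == one) => /=; ring.
Qed.

Fixpoint ad_delta1 m : W -> C :=
  if m is m'.+1 then fun w => catconv delta1 (ad_delta1 m') w - catconv (ad_delta1 m') delta1 w
  else deltay.

Fixpoint weight m : W -> C :=
  if m is m'.+1 then fun w => weight m' w + lam * catconv delta1 (weight m') w
  else fun w => eps w + lam * delta1 w.

Lemma one_supported_weight m : one_supported (weight m).
Proof.
have sd := @one_supported_delta1 C X; have se := @one_supported_eps C X.
elim: m => [|m IHm] w nw /=; first by rewrite sd ?se ?mulr0 ?addr0.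
by rewrite IHm ?one_supported_catconv ?mulr0 ?addr0.
Qed.

Lemma skew_primitive_ad_delta1 m : skew_primitive lam (weight m) (ad_delta1 m).
Proof.
elim: m => [|m IHm]; first exact: skew_primitive_deltay.
apply: skew_primitive_commutator IHm _; first exact: coshuffle_delta1.
exact: catconvC_one_supported (one_supported_weight m) (@one_supported_delta1 C X).
Qed.

Definition homogeneous k phi : Prop := forall w, size w != k -> phi w = 0.

Lemma homogeneous_catconv k l phi psi :
  homogeneous k phi -> homogeneous l psi -> homogeneous (k + l) (catconv phi psi).
Proof.
move=> hphi hpsi w nw; apply: big1 => i _.
have [ki|/hphi->] := eqVneq (size (take i w)) k; last by rewrite mul0r.
have [li|/hpsi->] := eqVneq (size (drop i w)) l; last by rewrite mulr0.
by rewrite -(cat_take_drop i w) size_cat ki li eqxx in nw.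
Qed.

Lemma homogeneous_letter f : homogeneous 1 (letter f).
Proof. by case=> [|a [|b w]]. Qed.

Lemma homogeneous_ad_delta1 m : homogeneous m.+1 (ad_delta1 m).
Proof.
elim: m => [|m IHm]; first exact: homogeneous_letter.
have hd : homogeneous 1 delta1 := homogeneous_letter _.
have hl : homogeneous m.+2 (catconv delta1 (ad_delta1 m)) := homogeneous_catconv hd IHm.
have hr : homogeneous m.+2 (catconv (ad_delta1 m) delta1).
  by rewrite -addn1; exact: homogeneous_catconv.
by move=> w nw /=; rewrite hl // hr // subr0.
Qed.

Definition ones_y m : W := rcons (nseq m one) y.

Lemma all_one_ones_y m : all_one (ones_y m) = false.
Proof. by rewrite /all_one /ones_y all_rcons /= ucm_eq1. Qed.

Lemma catconv_delta1_one phi w : catconv delta1 phi (one :: w) = phi w.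
Proof.
rewrite catconv_cons /= mul0r add0r -[RHS](catconv_epsl phi).
by apply: eq_catconv => // w'; rewrite /dcons /delta1 letter_cons eqxx mul1r.
Qed.

Lemma catconv_delta1_rcons_y phi s : catconv phi delta1 (rcons s y) = 0.
Proof.
elim: s phi => [|c s IHs] phi; rewrite /= catconv_cons /delta1 letter_cons.
  by rewrite ucm_eq1 mul0r mulr0 add0r /catconv big_ord1 mulr0.
by rewrite IHs (_ : eps (rcons s y) = 0) ?mulr0 ?addr0 //; case: s {IHs}.
Qed.

Lemma ad_delta1_ones_y m : ad_delta1 m (ones_y m) = 1.
Proof.
elim: m => [|m IHm] /=; first by rewrite eqxx.
have ones_yS : ones_y m.+1 = one :: ones_y m by [].
by rewrite {1}ones_yS catconv_delta1_one IHm catconv_delta1_rcons_y subr0.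
Qed.

Lemma ad_delta1_ones_y_neq m n : m != n -> ad_delta1 m (ones_y n) = 0.
Proof.
by move=> mn; apply: homogeneous_ad_delta1; rewrite size_rcons size_nseq eqSS eq_sym.
Qed.

End IteratedCommutators.

Section ChainOfIdeals.
Variables (C : comNzRingType) (X : choiceType) (lam : C) (x : X).
Local Notation Sha := (Sha C X).
Local Notation coshuffle := (coshuffle lam).
Local Notation ad_delta1 := (ad_delta1 C x).
Implicit Types (r f : Sha) (chi : Word X -> C).

Lemma mpair_sha_mul chi r f :
  mpair chi (sha_mul lam r f) =
  \sum_(s <- msupp r) \sum_(t <- msupp f)
     (r@_s * f@_t) * coshuffle (fun w => chi (mulcm s.1 t.1, w)) s.2 t.2.
Proof.
rewrite mpair_sum; apply: eq_bigr => s _; rewrite mpair_sum; apply: eq_bigr => t _.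
rewrite mpairZ mpair_sum; congr (_ * _); apply: eq_bigr => w _.
by rewrite mpairU.
Qed.

Definition one_tail_free f : Prop := forall t : Word X, all_one t.2 -> f@_t = 0.

Definition ad_orthogonal n f : Prop :=
  forall m, (n <= m)%N -> mpair (fun t => ad_delta1 m t.2) f = 0.

Definition chain_ideal n f : Prop := one_tail_free f /\ ad_orthogonal n f.

Lemma one_tail_free_mul r f : one_tail_free f -> one_tail_free (sha_mul lam r f).
Proof.
move=> f1 t t1; rewrite mcoeff_mpair mpair_sha_mul big1 // => s _; apply: big1 => u _.
have [u1|nu1] := boolP (all_one u.2); first by rewrite f1 // mulr0 mul0r.
rewrite coshuffle_one_supported ?mulr0 // => w nw.
have [wt|//] := eqVneq (mulcm s.1 u.1, w) t.
by rewrite -wt /= (negbTE nw) in t1.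
Qed.

Lemma ad_orthogonal_mul n r f :
  one_tail_free f -> ad_orthogonal n f -> ad_orthogonal n (sha_mul lam r f).
Proof.
move=> f1 fad m nm; rewrite mpair_sha_mul.
rewrite (eq_bigr (fun s => r@_s * weight lam m s.2 * mpair (fun t => ad_delta1 m t.2) f)).
  by rewrite big1 // => s _; rewrite fad // mulr0.
move=> s _; rewrite mmapE big_distrr; apply: eq_bigr => t _ /=.
rewrite skew_primitive_ad_delta1.
have [t1|nt1] := boolP (all_one t.2); first by rewrite f1 // !(mulr0, mul0r).
by rewrite (one_supported_weight _ _ nt1) mulr0 add0r; ring.
Qed.

Lemma sha_ideal_chain_ideal n : sha_ideal lam (chain_ideal n).
Proof.
split.
- by split=> [t _|m _]; rewrite ?mcoeff0 ?raddf0.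
- move=> f g [f1 fad] [g1 gad]; split=> [t t1|m nm].
    by rewrite mcoeffB f1 // g1 // subr0.
  by rewrite raddfB /= fad // gad // subr0.
- by move=> r f [f1 fad]; split; [apply: one_tail_free_mul | apply: ad_orthogonal_mul].
Qed.

Lemma chain_idealS n f : chain_ideal n f -> chain_ideal n.+1 f.
Proof. by case=> f1 fad; split=> // m /ltnW; apply: fad. Qed.

Lemma ones_y_chain_ideal n : chain_ideal n.+1 << (onecm X, ones_y x n) >>.
Proof.
split=> [t t1|m nm]; last by rewrite mpairU mul1r ad_delta1_ones_y_neq // gtn_eqF.
by rewrite mcoeffU; case: eqP => // tn; rewrite -tn all_one_ones_y in t1.
Qed.

Lemma ones_y_notin_chain_ideal n : ~ chain_ideal n << (onecm X, ones_y x n) >>.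
Proof.
case=> _ /(_ n (leqnn n)); rewrite mpairU mul1r ad_delta1_ones_y.
exact/eqP/oner_neq0.
Qed.

End ChainOfIdeals.

Theorem theorem3p3 (C : comNzRingType) (X : choiceType) (lambda : C) :
  char_zero C -> (exists x : X, True) -> ~ @sha_noetherian C X lambda.
Proof.
move=> _ [x _] /(_ _ (sha_ideal_chain_ideal lambda x) (@chain_idealS C X x)) [N stable].
apply: (ones_y_notin_chain_ideal (x := x) (n := N)).
by apply/(stable N.+1 (leqnSn N)); apply: ones_y_chain_ideal.
Qed.
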